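(* Let the sequence $\{(z_n,x_n,w_n,y_n,\tau_n)\}$ be generated by the P-GRPDA iteration described in the context, where the parameters $\psi,\mu,\mu'$ satisfy \begin{equation*} 0<3\mu'<\mu<\frac{\psi}{2}+\frac{\psi(1+\psi-\psi^2)}{2(\psi+1)},\qquad \psi\in(1,1+\sqrt{3}). \end{equation*} Then $\{(x_n,y_n)\}$ converges to a solution of the saddle point problem $\min_{x\in\mathbb{X}}\max_{y\in\mathbb{Y}} \mathbb{L}(x,y)=f(x)+h(x)+\langle Kx,y\rangle-g^*(y)$.
   Context: Let $\mathbb{X},\mathbb{Y}$ be finite-dimensional real Hilbert spaces, $K:\mathbb{X}\to\mathbb{Y}$ a linear operator with adjoint $K^*$, $f:\mathbb{X}\to(-\infty,\infty]$ and $g:\mathbb{Y}\to(-\infty,\infty]$ proper, convex, lower semicontinuous, with $g^*$ the Legendre–Fenchel conjugate of $g$, and $h:\mathbb{X}\to\mathbb{R}$ convex and differentiable with $\bar L$-Lipschitz continuous gradient. Assume the set of solutions of the saddle point problem $\min_x\max_y f(x)+h(x)+\langle Kx,y\rangle-g^*(y)$ is nonempty, that $0\in\operatorname{ri}\big(K(\operatorname{dom} f)-\operatorname{dom} g\big)$, and that the proximal operators of $f$ and $g$ can be evaluated efficiently. The P-GRPDA iteration: choose $x_0\in\mathbb{X}$, $y_0\in\mathbb{Y}$, $z_0=x_0$, $\beta>0$, $\tau_0>0$, and for $n\ge1$ compute $z_n=\frac{\psi-1}{\psi}x_{n-1}+\frac1\psi z_{n-1}$, $x_n=\operatorname{prox}_{\tau_{n-1}f}\big(z_n-\tau_{n-1}K^*y_{n-1}-\tau_{n-1}\nabla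 h(x_{n-1})\big)$, $\tau_n=\min\Big\{\tau_{n-1},\ \frac{\mu\|x_n-x_{n-1}\|}{\sqrt\beta\,\|Kx_n-Kx_{n-1}\|},\ \frac{\mu'\|x_n-x_{n-1}\|}{\|\nabla h(x_n)-\nabla h(x_{n-1})\|}\Big\}$ (with conventions $1/0=\infty$ and $0/0=\infty$), $\sigma_n=\beta\tau_n$, $w_n=\operatorname{prox}_{\frac{1}{\sigma_n}g}\big(\frac{y_{n-1}}{\sigma_n}+Kx_n\big)$, $y_n=y_{n-1}+\sigma_n(Kx_n-w_n)$ (equivalently $y_n=\operatorname{prox}_{\sigma_n g^*}(y_{n-1}+\sigma_nKx_n)$). *)

From HB Require Import structures.
From mathcomp Require Import all_boot all_order all_algebra.
From mathcomp Require Import all_classical all_reals all_analysis.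
Set Implicit Arguments. Unset Strict Implicit. Unset Printing Implicit Defensive.
Import Order.TTheory GRing.Theory Num.Theory.
Import numFieldNormedType.Exports.
Local Open Scope ring_scope.
Local Open Scope classical_set_scope.

(* The finite-dimensional real Hilbert space of dimension n is modelled as
   column vectors 'cV[R]_n with the standard Euclidean inner product. *)
Definition ip (R : realType) (n : nat) (u v : 'cV[R]_n) : R :=
  \sum_(i < n) u i 0 * v i 0.

Definition nrm (R : realType) (n : nat) (u : 'cV[R]_n) : R :=
  Num.sqrt (ip u u).

Definition econvex (R : realType) (n : nat) (f : 'cV[R]_n -> \bar R) : Prop :=
  forall (x y : 'cV[R]_n) (t : R), 0 < t -> t < 1 ->
    let z := (t *: x + (1 - t) *: y)%R in (f z <= t%:E * f x + (1 - t)%:E * f y)%E.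

Definition eproper (R : realType) (n : nat) (f : 'cV[R]_n -> \bar R) : Prop :=
  (forall x, f x <> -oo%E) /\ (exists x, f x <> +oo%E).

(* Lower semicontinuity = (sequential) closedness of the epigraph. *)
Definition elsc (R : realType) (n : nat) (f : 'cV[R]_n -> \bar R) : Prop :=
  forall (u : nat -> 'cV[R]_n) (a : nat -> R) (x : 'cV[R]_n) (al : R),
    (fun k => nrm (u k - x)) @ \oo --> (0 : R) ->
    a @ \oo --> al ->
    (forall k, (f (u k) <= (a k)%:E)%E) -> (f x <= al%:E)%E.

Definition edom (R : realType) (n : nat) (f : 'cV[R]_n -> \bar R) : set 'cV[R]_n :=
  [set x | (f x < +oo)%E].

Definition conj_fun (R : realType) (n : nat) (g : 'cV[R]_n -> \bar R)
  (y : 'cV[R]_n) : \bar R :=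
  ereal_sup [set ((ip v y)%:E - g v)%E | v in [set: 'cV[R]_n]].

Definition aff_hull (R : realType) (n : nat) (S : set 'cV[R]_n) : set 'cV[R]_n :=
  [set x | exists (k : nat) (p : 'I_k -> 'cV[R]_n) (c : 'I_k -> R),
      (forall i, S (p i)) /\ \sum_(i < k) c i = 1 /\ x = \sum_(i < k) c i *: p i].

Definition rel_int (R : realType) (n : nat) (S : set 'cV[R]_n) : set 'cV[R]_n :=
  [set x | S x /\ exists2 e : R, 0 < e &
      forall z, aff_hull S z -> nrm (z - x) < e -> S z].

Definition is_prox (R : realType) (n : nat) (t : R) (f : 'cV[R]_n -> \bar R)
  (v p : 'cV[R]_n) : Prop :=
  forall u, (t%:E * f p + (nrm (p - v) ^+ 2 / 2)%:E
             <= t%:E * f u + (nrm (u - v) ^+ 2 / 2)%:E)%E.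

(* a / b with the conventions 1/0 = oo and 0/0 = oo *)
Definition divinf (R : realType) (a b : R) : \bar R :=
  if b == 0 then +oo%E else (a / b)%:E.

Definition lagr (R : realType) (n m : nat) (f : 'cV[R]_n -> \bar R)
  (h : 'cV[R]_n -> R) (K : 'M[R]_(m, n)) (g : 'cV[R]_m -> \bar R)
  (x : 'cV[R]_n) (y : 'cV[R]_m) : \bar R :=
  (f x + (h x + ip (K *m x) y)%:E - conj_fun g y)%E.

Definition saddle_point (R : realType) (n m : nat) (f : 'cV[R]_n -> \bar R)
  (h : 'cV[R]_n -> R) (K : 'M[R]_(m, n)) (g : 'cV[R]_m -> \bar R)
  (xs : 'cV[R]_n) (ys : 'cV[R]_m) : Prop :=
  (f xs < +oo)%E /\ (conj_fun g ys < +oo)%E /\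
  forall x y, (lagr f h K g xs y <= lagr f h K g xs ys)%E /\
              (lagr f h K g xs ys <= lagr f h K g x ys)%E.

Definition is_gradient (R : realType) (n : nat) (h : 'cV[R]_n -> R)
  (gh : 'cV[R]_n -> 'cV[R]_n) : Prop :=
  forall x (eps : R), 0 < eps -> exists2 del : R, 0 < del &
    forall d, nrm d < del -> `|h (x + d) - h x - ip (gh x) d| <= eps * nrm d.

Definition rconvex (R : realType) (n : nat) (h : 'cV[R]_n -> R) : Prop :=
  forall (x y : 'cV[R]_n) (t : R), 0 <= t -> t <= 1 ->
    h (t *: x + (1 - t) *: y) <= t * h x + (1 - t) * h y.

From HB Require Import structures.
From mathcomp Require Import all_boot all_order all_algebra.
From mathcomp Require Import all_classical all_reals all_analysis.
From mathcomp Require Import ring lra.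
Import Order.TTheory GRing.Theory Num.Theory.
Import numFieldNormedType.Exports.
Local Open Scope ring_scope.
Local Open Scope classical_set_scope.
Set Implicit Arguments. Unset Strict Implicit. Unset Printing Implicit Defensive.

(* For a saddle point (a, b) consider the energy
     E_k = beta psi/(psi - 1) |z_(k+1) - a|^2 + |y_(k-1) - b|^2 + beta mu' |x_k - x_(k-1)|^2.
   Adding the optimality conditions of the two proximal steps, the saddle-point
   inequalities and the convexity of h, and bounding the coupling and gradient terms
   with the linesearch conditions, gives
     E_(k+1) + beta Q_k + (1 - mu) |y_k - y_(k-1)|^2 <= E_k,
   where Q_k is a quadratic form in x_(k+1) - z_(k+1) and z_(k+1) - x_k whose
   coefficients depend on the ratios of consecutive steps.  The steps are nonincreasing
   and bounded below by the Lipschitz constants of K and grad h, so these ratios tend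
   to 1, and the condition on (psi, mu, mu') makes Q_k eventually coercive.  Hence the
   residuals vanish and the iterates are bounded; passing to the limit in the
   optimality conditions along a convergent subsequence (f and the conjugate of g are
   lower semicontinuous) shows that its limit is a saddle point, and the energy
   measured from this point, being eventually nonincreasing and null along the
   subsequence, tends to 0. *)

Section Euclidean.
Variable R : realType.
Implicit Types a : R.

Lemma ipE n (u v : 'cV[R]_n) : ip u v = (u^T *m v) 0 0.
Proof. by rewrite /ip !mxE; apply: eq_bigr => i _; rewrite !mxE. Qed.

Lemma ipC n (u v : 'cV[R]_n) : ip u v = ip v u.
Proof. by rewrite /ip; apply: eq_bigr => i _; rewrite mulrC. Qed.

Lemma ipDl n (u v w : 'cV[R]_n) : ip (u + v) w = ip u w + ip v w.
Proof. by rewrite !ipE linearD /= mulmxDl mxE. Qed.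

Lemma ipDr n (u v w : 'cV[R]_n) : ip w (u + v) = ip w u + ip w v.
Proof. by rewrite !(ipC w) ipDl. Qed.

Lemma ipZl n a (u w : 'cV[R]_n) : ip (a *: u) w = a * ip u w.
Proof. by rewrite !ipE linearZ /= -scalemxAl mxE. Qed.

Lemma ipZr n a (u w : 'cV[R]_n) : ip w (a *: u) = a * ip w u.
Proof. by rewrite !(ipC w) ipZl. Qed.

Lemma ipNl n (u w : 'cV[R]_n) : ip (- u) w = - ip u w.
Proof. by rewrite -scaleN1r ipZl mulN1r. Qed.

Lemma ipNr n (u w : 'cV[R]_n) : ip w (- u) = - ip w u.
Proof. by rewrite !(ipC w) ipNl. Qed.

Lemma ipBl n (u v w : 'cV[R]_n) : ip (u - v) w = ip u w - ip v w.
Proof. by rewrite ipDl ipNl. Qed.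

Lemma ipBr n (u v w : 'cV[R]_n) : ip w (u - v) = ip w u - ip w v.
Proof. by rewrite ipDr ipNr. Qed.

Lemma ip0l n (w : 'cV[R]_n) : ip 0 w = 0.
Proof. by rewrite /ip big1 // => i _; rewrite mxE mul0r. Qed.

Lemma ip0r n (w : 'cV[R]_n) : ip w 0 = 0.
Proof. by rewrite ipC ip0l. Qed.

Lemma ip_trmx n m (K : 'M[R]_(m, n)) (y : 'cV[R]_m) (x : 'cV[R]_n) :
  ip (K^T *m y) x = ip y (K *m x).
Proof. by rewrite !ipE trmx_mul trmxK mulmxA. Qed.

Definition sqnrm n (u : 'cV[R]_n) := ip u u.

Lemma sqnrm_ge0 n (u : 'cV[R]_n) : 0 <= sqnrm u.
Proof. by rewrite /sqnrm /ip sumr_ge0 // => i _; rewrite -expr2 sqr_ge0. Qed.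

Lemma sqnrm_eq0 n (u : 'cV[R]_n) : sqnrm u = 0 -> u = 0.
Proof.
move=> /eqP; rewrite /sqnrm /ip psumr_eq0 => [/allP u0|i _]; last first.
  by rewrite -expr2 sqr_ge0.
apply/matrixP => i j; rewrite (ord1 j) mxE.
have /u0 : i \in index_enum 'I_n by rewrite mem_index_enum.
by rewrite /= -expr2 sqrf_eq0 => /eqP.
Qed.

Lemma sqnrmD n (u v : 'cV[R]_n) : sqnrm (u + v) = sqnrm u + 2 * ip u v + sqnrm v.
Proof. by rewrite /sqnrm ipDl !ipDr (ipC v u); ring. Qed.

Lemma sqnrmN n (u : 'cV[R]_n) : sqnrm (- u) = sqnrm u.
Proof. by rewrite /sqnrm ipNl ipNr opprK. Qed.

Lemma sqnrmBC n (u v : 'cV[R]_n) : sqnrm (u - v) = sqnrm (v - u).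
Proof. by rewrite -sqnrmN opprB. Qed.

Lemma sqnrmZ n a (u : 'cV[R]_n) : sqnrm (a *: u) = a ^+ 2 * sqnrm u.
Proof. by rewrite /sqnrm ipZl ipZr mulrA expr2. Qed.

Lemma nrm_ge0 n (u : 'cV[R]_n) : 0 <= nrm u.
Proof. exact: sqrtr_ge0. Qed.

Lemma sqr_nrm n (u : 'cV[R]_n) : nrm u ^+ 2 = sqnrm u.
Proof. by rewrite sqr_sqrtr // sqnrm_ge0. Qed.

Lemma nrmBC n (u v : 'cV[R]_n) : nrm (u - v) = nrm (v - u).
Proof. by rewrite /nrm -!/(sqnrm _) sqnrmBC. Qed.

Lemma nrmZ n a (u : 'cV[R]_n) : nrm (a *: u) = `|a| * nrm u.
Proof. by rewrite /nrm -/(sqnrm _) sqnrmZ sqrtrM ?sqr_ge0 // sqrtr_sqr. Qed.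

Lemma ip_young n a (u v : 'cV[R]_n) : 0 < a ->
  2 * ip u v <= a * sqnrm u + a^-1 * sqnrm v.
Proof.
move=> a0; have := sqnrm_ge0 (a *: u - v).
rewrite sqnrmD sqnrmN sqnrmZ ipNr ipZl => sq_ge0.
rewrite -(ler_pM2l a0).
have -> : a * (a * sqnrm u + a^-1 * sqnrm v) = a ^+ 2 * sqnrm u + sqnrm v.
  by field; rewrite gt_eqF.
by lra.
Qed.

Lemma ip_cauchy_schwarz n (u v : 'cV[R]_n) : `|ip u v| <= nrm u * nrm v.
Proof.
have [u0|nu0] := eqVneq (nrm u) 0.
  have /sqnrm_eq0 -> : sqnrm u = 0 by rewrite -sqr_nrm u0 expr0n.
  by rewrite ip0l normr0 mulr_ge0 // nrm_ge0.
have [v0|nv0] := eqVneq (nrm v) 0.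
  have /sqnrm_eq0 -> : sqnrm v = 0 by rewrite -sqr_nrm v0 expr0n.
  by rewrite ip0r normr0 mulr_ge0 // nrm_ge0.
have a0 : 0 < nrm v / nrm u by rewrite divr_gt0 // lt0r ?nu0 ?nv0 nrm_ge0.
have Y1 := ip_young u v a0; have Y2 := ip_young u (- v) a0.
rewrite ipNr sqnrmN in Y2; rewrite -!sqr_nrm invf_div in Y1 Y2.
have E : nrm v / nrm u * nrm u ^+ 2 + nrm u / nrm v * nrm v ^+ 2 =
  2 * (nrm u * nrm v) by field; rewrite nu0 nv0.
rewrite E in Y1 Y2.
by rewrite ler_norml; apply/andP; split; lra.
Qed.

Lemma nrmD_le n (u v : 'cV[R]_n) : nrm (u + v) <= nrm u + nrm v.
Proof.
rewrite -(ler_pXn2r (_ : 0 < 2)%N) ?nnegrE ?addr_ge0 ?nrm_ge0 //.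
rewrite sqr_nrm /sqnrm ipDl !ipDr (ipC v u) -!/(sqnrm _) -!sqr_nrm.
have := ler_norm (ip u v); have := ip_cauchy_schwarz u v; lra.
Qed.

Lemma sqnrmD_le n (u v : 'cV[R]_n) : sqnrm (u + v) <= 2 * sqnrm u + 2 * sqnrm v.
Proof.
by have := ip_young u v ltr01; rewrite sqnrmD invr1 !mul1r; lra.
Qed.

Lemma ip_three_point n (u v w : 'cV[R]_n) :
  2 * ip (u - v) (w - v) = sqnrm (u - v) + sqnrm (w - v) - sqnrm (u - w).
Proof. by rewrite /sqnrm !ipBl !ipBr (ipC v u) (ipC w u) (ipC w v); ring. Qed.

Lemma sqnrm_golden n psi (x z z' a : 'cV[R]_n) : 1 < psi ->
  z' = ((psi - 1) / psi) *: x + psi^-1 *: z ->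
  sqnrm (x - a) = psi / (psi - 1) * sqnrm (z' - a)
    - (psi / (psi - 1) - 1) * sqnrm (z - a) + psi^-1 * sqnrm (x - z).
Proof.
move=> psi1 ->.
have psi0 : psi != 0 by rewrite gt_eqF // (lt_trans ltr01).
have psi10 : psi - 1 != 0 by rewrite subr_eq0 gt_eqF.
have -> : (psi - 1) / psi *: x + psi^-1 *: z - a =
    ((psi - 1) / psi) *: (x - a) + psi^-1 *: (z - a).
  by apply/matrixP => i j; rewrite !mxE; field.
have -> : x - z = (x - a) - (z - a) by rewrite opprB addrA subrK.
rewrite /sqnrm !(ipDl, ipDr, ipZl, ipZr, ipNl, ipNr) (ipC z x) (ipC a x) (ipC a z).
by field; rewrite psi0 psi10.
Qed.

(* Young's inequality with weight [A + B] absorbs the cross term [2 B <u, v>]. *)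
Lemma quad_form_ge0 n A B C (u v : 'cV[R]_n) : 0 < A + B ->
  B ^+ 2 <= (A + B) * (C + B) -> 0 <= A * sqnrm u + C * sqnrm v + B * sqnrm (u + v).
Proof.
move=> AB0 disc; have Y := ip_young u (- B *: v) AB0.
rewrite ipZr sqnrmZ sqrrN in Y.
rewrite sqnrmD.
have Hv := sqnrm_ge0 v; have Hu := sqnrm_ge0 u.
have : (A + B)^-1 * (B ^+ 2 * sqnrm v) <= (C + B) * sqnrm v.
  by rewrite mulrA ler_wpM2r // ler_pdivrMl.
nra.
Qed.

End Euclidean.

Section VectorConvergence.
Variable R : realType.

Definition vcvg n (u : nat -> 'cV[R]_n) (l : 'cV[R]_n) : Prop :=
  (fun k => nrm (u k - l)) @ \oo --> (0 : R).

Lemma nrm_cvg0P n (u : nat -> 'cV[R]_n) :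
  (fun k => nrm (u k)) @ \oo --> (0 : R) <-> (fun k => sqnrm (u k)) @ \oo --> (0 : R).
Proof.
split => u0.
- have -> : (fun k => sqnrm (u k)) = (fun k => nrm (u k) * nrm (u k)).
    by apply/funext => k; rewrite -expr2 sqr_nrm.
  by rewrite -(mulr0 0); exact: cvgM.
- by have := cvg_comp _ _ u0 (@sqrt_continuous R 0); rewrite sqrtr0.
Qed.

Lemma sqnrm_cvg0_comp n (u : nat -> 'cV[R]_n) (phi : nat -> nat) :
  phi @ \oo --> \oo -> (fun k => sqnrm (u k)) @ \oo --> (0 : R) ->
  (fun j => nrm (u (phi j))) @ \oo --> (0 : R).
Proof. by move=> phi_oo /nrm_cvg0P u0; exact: cvg_comp _ _ phi_oo u0. Qed.

Lemma vcvg_cst n (c : 'cV[R]_n) : vcvg (fun=> c) c.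
Proof. by rewrite /vcvg subrr /nrm ip0l sqrtr0; exact: cvg_cst. Qed.

Lemma vcvg_dominated n m (u : nat -> 'cV[R]_n) l (v : nat -> 'cV[R]_m) l' C :
  (\forall k \near \oo, nrm (v k - l') <= C * nrm (u k - l)) ->
  vcvg u l -> vcvg v l'.
Proof.
move=> vu ul; apply: (@squeeze_cvgr _ _ _ _ (fun=> 0) (fun k => C * nrm (u k - l))).
- by near=> k; rewrite nrm_ge0 /=; near: k.
- exact: cvg_cst.
- by rewrite -(mulr0 C); exact: cvgM (cvg_cst C) ul.
Unshelve. all: by end_near.
Qed.

Lemma vcvg_close n (u v : nat -> 'cV[R]_n) l :
  vcvg u l -> (fun k => nrm (v k - u k)) @ \oo --> (0 : R) -> vcvg v l.
Proof.
move=> ul vu; apply: (@squeeze_cvgr _ _ _ _ (fun=> 0)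
  (fun k => nrm (v k - u k) + nrm (u k - l))).
- near=> k; rewrite nrm_ge0 /=.
  by have := nrmD_le (v k - u k) (u k - l); rewrite addrA subrK.
- exact: cvg_cst.
- by rewrite -(addr0 0); exact: cvgD.
Unshelve. all: by end_near.
Qed.

Lemma ip_vcvg n (u v : nat -> 'cV[R]_n) l m : vcvg u l -> vcvg v m ->
  (fun k => ip (u k) (v k)) @ \oo --> ip l m.
Proof.
move=> ul vm; apply/subr_cvg0/norm_cvg0P.
apply: (@squeeze_cvgr _ _ _ _ (fun=> 0) (fun k => nrm (u k - l) * nrm (v k - m)
  + nrm (u k - l) * nrm m + nrm l * nrm (v k - m))).
- near=> k; rewrite normr_ge0 /=.
  have -> : ip (u k) (v k) - ip l m =
      ip (u k - l) (v k - m) + ip (u k - l) m + ip l (v k - m).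
    by rewrite !ipBl !ipBr; ring.
  apply: le_trans (ler_normD _ _) _; rewrite lerD ?ip_cauchy_schwarz //.
  by apply: le_trans (ler_normD _ _) _; rewrite lerD ?ip_cauchy_schwarz.
- exact: cvg_cst.
- have -> : 0 = 0 * 0 + 0 * nrm m + nrm l * 0 :> R by rewrite !(mul0r, mulr0) !addr0.
  by apply: cvgD; [apply: cvgD; [exact: cvgM | exact: cvgM ul (cvg_cst _)] |
    exact: cvgM (cvg_cst _) vm].
Unshelve. all: by end_near.
Qed.

Lemma sqr_entry_le_sqnrm n (u : 'cV[R]_n) i : u i 0 ^+ 2 <= sqnrm u.
Proof.
rewrite /sqnrm /ip (bigD1 i) //= expr2 lerDl.
by apply: sumr_ge0 => j _; rewrite -expr2 sqr_ge0.
Qed.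

Lemma sqnrm_le_entries n (u : 'cV[R]_n) d :
  (forall i, `|u i 0| <= d) -> sqnrm u <= n%:R * d ^+ 2.
Proof.
move=> ud; apply: (@le_trans _ _ (\sum_(i < n) d ^+ 2)).
  apply: ler_sum => i _.
  rewrite -expr2 -real_normK ?num_real // ler_pXn2r ?nnegrE ?normr_ge0 //.
  exact: le_trans (normr_ge0 _) (ud i).
by rewrite sumr_const card_ord mulr_natl.
Qed.

Lemma geq_id_cvgn (phi : nat -> nat) : (forall j, (j <= phi j)%N) -> phi @ \oo --> \oo.
Proof.
move=> phi_ge; apply/cvgnyPge => A; near=> j; apply: leq_trans (phi_ge j).
by near: j; exact: nbhs_infty_ge.
Unshelve. all: by end_near.
Qed.

(* Bolzano--Weierstrass: a cluster point in a compact box of 'rV_n makes 0 a cluster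
   point of the real sequence of squared distances to it. *)
Lemma vcvg_subseq n (u : nat -> 'cV[R]_n) c B :
  (\forall k \near \oo, sqnrm (u k - c) <= B) ->
  exists xb (phi : nat -> nat), (forall j, (j < phi j)%N) /\ vcvg (u \o phi) xb.
Proof.
move=> uB; pose v k := u k - c.
pose S := [set r : 'rV[R]_n | forall i, `[(- (1 + B)), 1 + B]%classic (r ord0 i)].
have cS : compact S.
  by apply: (@rV_compact _ n (fun=> `[(- (1 + B)), 1 + B]%classic)) => i;
    exact: segment_compact.
pose F := (fun k => (v k)^T) @ \oo.
have FS : \forall k \near \oo, S (v k)^T.
  near=> k => i /=; rewrite in_itv /= -ler_norml mxE.
  apply: (@le_trans _ _ (1 + v k i 0 ^+ 2)).
    have := sqr_ge0 (`|v k i 0| - 1); rewrite -(real_normK (num_real (v k i 0))).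
    by have := normr_ge0 (v k i 0); nra.
  by rewrite lerD2l (le_trans (sqr_entry_le_sqnrm _ _)) //; near: k.
have [r [_ Fr]] := cS F _ FS.
have [phi phi_incr vphi] : exists2 phi : nat -> nat, increasing_seq phi &
    (fun k => sqnrm (v k - r^T)) \o phi @ \oo --> 0.
  apply/cluster_eventually_cvg/cluster_eventuallyP => e N e0.
  pose d := Num.min 1 (e / (n%:R + 1)).
  have d0 : 0 < d by rewrite lt_min ltr01 divr_gt0 // ltr_wpDl.
  have FN : F [set (v k)^T | k in [set k | (N <= k)%N]] by exists N => // k kN; exists k.
  have [_ [[k kN <-] /= [_ vkr]]] := Fr _ (ball r d) FN (@nbhsx_ballx R _ r d d0).
  exists k => //; rewrite sub0r normrN ger0_norm ?sqnrm_ge0 //.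
  apply: (le_trans (sqnrm_le_entries (d := d) _)).
    by move=> i; have := vkr ord0 i; rewrite /ball /= !mxE distrC => /ltW.
  have d1 : d <= 1 by rewrite ge_min lexx.
  have : d * (n%:R + 1) <= e by rewrite -ler_pdivlMr ?ltr_wpDl // ge_min lexx orbT.
  by have := ler0n R n; nra.
move/increasing_seqP : phi_incr => phi_incr.
have phi_ge j : (j <= phi j)%N.
  by elim: j => // j IH; apply: leq_ltn_trans IH (phi_incr j).
exists (r^T + c), (fun j => phi j.+1); split => [j|]; first exact: phi_ge j.+1.
apply/nrm_cvg0P; rewrite -cvg_shiftS in vphi.
apply: cvg_trans vphi; apply: near_eq_cvg; apply: nearW => j /=.
by rewrite /v opprD addrA addrAC.
Unshelve. all: by end_near.
Qed.

End VectorConvergence.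

Lemma descent_cvg (R : realType) (E D : nat -> R) :
  (forall k, 0 <= E k) -> (forall k, 0 <= D k) ->
  (\forall k \near \oo, E k.+1 + D k <= E k) -> cvgn E /\ D @ \oo --> 0.
Proof.
move=> E0 D0 ED; have [N _ EN] := ED.
have EN_cvg : (fun j => E (j + N)%N) @ \oo --> inf (range (fun j => E (j + N)%N)).
  apply: nonincreasing_cvgn; last by exists 0 => _ [j _ <-]; exact: E0.
  apply/nonincreasing_seqP => j; have := EN (j + N)%N (leq_addl _ _).
  by have := D0 (j + N)%N; rewrite addSn; lra.
set l := inf _ in EN_cvg.
have E_cvg : E @ \oo --> l by rewrite -(cvg_shiftn N).
split; first by apply/cvg_ex; exists l.
apply: (@squeeze_cvgr _ _ _ _ (fun=> 0) (fun k => E k - E k.+1)).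
- near=> k; rewrite D0 /=.
  have EDk : E k.+1 + D k <= E k by near: k; exact: ED.
  by lra.
- exact: cvg_cst.
- by rewrite -(subrr l); apply: cvgB => //; rewrite cvg_shiftS.
Unshelve. all: by end_near.
Qed.

Section ConvexAnalysis.
Variable R : realType.

Lemma le0_of_small_mul (D Q : R) : 0 <= Q ->
  (forall s, 0 < s -> s < 1 -> D <= s * Q) -> D <= 0.
Proof.
move=> Q0 DQ; apply/ler_addgt0Pr => e e0; rewrite add0r.
have Q1 : 0 < Q + 1 by rewrite ltr_wpDl.
pose s := Num.min 2^-1 (e / (Q + 1)).
have s0 : 0 < s by rewrite lt_min invr_gt0 ltr0n divr_gt0.
have s1 : s < 1 by rewrite gt_min invf_lt1 ?ltr1n.
apply: le_trans (DQ s s0 s1) _.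
have : s * (Q + 1) <= e by rewrite -ler_pdivlMr // ge_min lexx orbT.
by nra.
Qed.

Lemma neq_infty_EFin (x : \bar R) : x <> -oo%E -> x <> +oo%E -> exists r, x = r%:E.
Proof. by case: x => [r | |] // _ _; exists r. Qed.

Lemma is_prox_fin n t (f : 'cV[R]_n -> \bar R) v p : 0 < t -> eproper f ->
  is_prox t f v p -> exists fp : R, f p = fp%:E.
Proof.
move=> t0 [fNy [x0 fx0]] prox_p; apply: neq_infty_EFin => // fp.
have [c fc] := neq_infty_EFin (fNy x0) fx0.
have := prox_p x0; rewrite fp fc.
by rewrite mulry gtr0_sg // mul1e addye // -!EFinM -EFinD leye_eq.
Qed.

(* Compare p with the convex combinations s u + (1 - s) p and let s -> 0. *)
Lemma is_prox_vi n t (f : 'cV[R]_n -> \bar R) v p : 0 < t ->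
  eproper f -> econvex f -> is_prox t f v p ->
  exists fp : R, f p = fp%:E /\
    forall u (fu : R), f u = fu%:E -> ip (v - p) (u - p) <= t * (fu - fp).
Proof.
move=> t0 Pf Cf prox_p; have [fp fpE] := is_prox_fin t0 Pf prox_p.
exists fp; split => // u fu fuE.
rewrite -subr_le0; apply: (@le0_of_small_mul _ (2^-1 * sqnrm (u - p))).
  by rewrite mulr_ge0 ?sqnrm_ge0 // invr_ge0.
move=> s s0 s1; set us := s *: u + (1 - s) *: p.
have := Cf u p s s0 s1; rewrite fuE fpE -!EFinM -EFinD /= -/us => fus_le.
have [c fusE] : exists c, f us = c%:E.
  by apply: neq_infty_EFin (Pf.1 _) _ => fus; move: fus_le; rewrite fus leye_eq.
rewrite fusE lee_fin in fus_le.
have := prox_p us; rewrite fpE fusE -!EFinM -!EFinD lee_fin !sqr_nrm.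
have -> : us - v = (p - v) + s *: (u - p).
  by apply/matrixP => i j; rewrite !mxE; ring.
rewrite (sqnrmD (p - v)) sqnrmZ ipZr => prox_le.
have -> : ip (v - p) (u - p) = - ip (p - v) (u - p) by rewrite -ipNl opprB.
have tc_le : t * c <= t * (s * fu + (1 - s) * fp) by rewrite ler_wpM2l // ltW.
rewrite -(ler_pM2l s0).
by set X := ip (p - v) (u - p) in prox_le *; set Q := sqnrm (u - p) in prox_le *; lra.
Qed.

Lemma convex_gradient_le n (h : 'cV[R]_n -> R) gh : rconvex h -> is_gradient h gh ->
  forall x y, h y + ip (gh y) (x - y) <= h x.
Proof.
move=> Ch Gh x y; set d := x - y; have d0 := nrm_ge0 d.
rewrite -subr_le0; apply: (le0_of_small_mul d0) => e e0 e1.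
have [del del0 Hd] := Gh y e e0.
have d1 : 0 < nrm d + 1 by rewrite ltr_wpDl.
pose s := Num.min 2^-1 (del / (nrm d + 1)).
have s0 : 0 < s by rewrite lt_min invr_gt0 ltr0n /= divr_gt0.
have s1 : s <= 1 by rewrite ge_min invf_le1 ?ler1n.
have sd_del : nrm (s *: d) < del.
  rewrite nrmZ (ger0_norm (ltW s0)).
  have : s * (nrm d + 1) <= del by rewrite -ler_pdivlMr // ge_min lexx orbT.
  by nra.
have := Hd _ sd_del; rewrite nrmZ (ger0_norm (ltW s0)) ipZr ler_norml => /andP[hd _].
have := Ch x y s (ltW s0) s1.
have -> : s *: x + (1 - s) *: y = y + s *: d.
  by apply/matrixP => i j; rewrite !mxE; ring.
move=> hc; rewrite -(ler_pM2l s0).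
by set X := ip (gh y) d in hd *; set hs := h (y + s *: d) in hd hc; lra.
Qed.

Lemma conj_fun_neq_Ny m (g : 'cV[R]_m -> \bar R) y : eproper g -> conj_fun g y <> -oo%E.
Proof.
move=> [gNy [x0 gx0]]; have [c gc] := neq_infty_EFin (gNy x0) gx0.
have : ((ip x0 y - c)%:E <= conj_fun g y)%E by apply: ereal_sup_ubound; exists x0; rewrite ?gc.
by move=> le_conj conjNy; rewrite conjNy leeNy_eq in le_conj.
Qed.

(* Moreau: w = prox_{g / sig} (y0 / sig + kx) lies in the subdifferential of g^* at y1. *)
Lemma prox_conj_subgradient m (g : 'cV[R]_m -> \bar R) (sig : R) y0 kx w y1 :
  0 < sig -> eproper g -> econvex g ->
  is_prox sig^-1 g (sig^-1 *: y0 + kx) w -> y1 = y0 + sig *: (kx - w) ->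
  exists G1 : R, conj_fun g y1 = G1%:E /\
    forall y, ((G1 + ip w (y - y1))%:E <= conj_fun g y)%E.
Proof.
move=> sig0 Pg Cg prox_w y1E; have sigV0 : 0 < sig^-1 by rewrite invr_gt0.
have [gw [gwE gw_vi]] := is_prox_vi sigV0 Pg Cg prox_w.
have y1w : sig^-1 *: y0 + kx - w = sig^-1 *: y1.
  by rewrite y1E scalerDr scalerA mulVf ?gt_eqF // scale1r addrA.
have w_max v gv : g v = gv%:E -> ip v y1 - gv <= ip w y1 - gw.
  move=> /gw_vi; rewrite y1w ipZl (ipC y1) ipBl.
  by rewrite ler_pM2l //; lra.
exists (ip w y1 - gw); split.
  apply/le_anti/andP; split.
    apply: ge_ereal_sup => _ [v _ <-].
    case gvE: (g v) => [gv | | ].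
    - by rewrite -EFinB lee_fin; exact: w_max.
    - by rewrite /= leNye.
    - by have := Pg.1 v; rewrite gvE.
  by apply: ereal_sup_ubound; exists w => //; rewrite gwE.
move=> y; apply: ereal_sup_ubound; exists w => //.
by rewrite gwE -EFinB ipBr; congr (_%:E); ring.
Qed.

Lemma conj_fun_lsc m (g : 'cV[R]_m -> \bar R) (u : nat -> 'cV[R]_m) yb (a : nat -> R) al :
  eproper g -> vcvg u yb -> a @ \oo --> al ->
  (forall k, conj_fun g (u k) <= (a k)%:E)%E -> (conj_fun g yb <= al%:E)%E.
Proof.
move=> Pg uyb a_al conj_le; apply: ge_ereal_sup => _ [v _ <-].
case gvE: (g v) => [gv | | ].
- rewrite -EFinB lee_fin; apply: (ler_cvg_to _ a_al).
    exact: cvgB (ip_vcvg (vcvg_cst v) uyb) (cvg_cst gv).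
  near=> k; rewrite -lee_fin EFinB; apply: le_trans (conj_le k).
  by apply: ereal_sup_ubound; exists v => //; rewrite gvE.
- by rewrite /= leNye.
- by have := Pg.1 v; rewrite gvE.
Unshelve. all: by end_near.
Qed.

Lemma saddle_point_fin n m (f : 'cV[R]_n -> \bar R) (h : 'cV[R]_n -> R)
    (K : 'M[R]_(m, n)) (g : 'cV[R]_m -> \bar R) a b :
  eproper f -> eproper g -> saddle_point f h K g a b ->
  exists Fa Gb : R, [/\ f a = Fa%:E, conj_fun g b = Gb%:E,
    (forall x (fx : R), f x = fx%:E ->
       Fa + h a + ip (K *m a) b <= fx + h x + ip (K *m x) b)
  & (forall y (gy : R), conj_fun g y = gy%:E ->
       ip (K *m a) y - gy <= ip (K *m a) b - Gb)].
Proof.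
move=> Pf Pg [fa [gb sad]].
have [Fa FaE] := neq_infty_EFin (Pf.1 a) (fun E => ltac:(by move: fa; rewrite E ltxx)).
have [Gb GbE] := neq_infty_EFin (conj_fun_neq_Ny (y := b) Pg)
  (fun E => ltac:(by move: gb; rewrite E ltxx)).
exists Fa, Gb; split => //.
- move=> x fx fxE; have [_] := sad x b.
  by rewrite /lagr FaE GbE fxE -!EFinN -!EFinD lee_fin; lra.
- move=> y gy gyE; have [+ _] := sad a y.
  by rewrite /lagr FaE GbE gyE -!EFinN -!EFinD lee_fin; lra.
Qed.

End ConvexAnalysis.

Lemma mulmx_nrm_le (R : realType) n m (K : 'M[R]_(m, n)) :
  exists2 C, 0 <= C & forall v, nrm (K *m v) <= C * nrm v.
Proof.
pose C := \sum_(i < m) sqnrm (row i K)^T.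
have C0 : 0 <= C by apply: sumr_ge0 => i _; exact: sqnrm_ge0.
exists (Num.sqrt C); first exact: sqrtr_ge0.
move=> v; rewrite /nrm -sqrtrM // ler_wsqrtr //.
have -> : ip (K *m v) (K *m v) = \sum_(i < m) ip (row i K)^T v ^+ 2.
  rewrite /ip; apply: eq_bigr => i _; rewrite expr2.
  by congr (_ * _); rewrite mxE; apply: eq_bigr => j _; rewrite !mxE.
rewrite -/(sqnrm v) /C mulr_suml; apply: ler_sum => i _.
rewrite -real_normK ?num_real // -!sqr_nrm -exprMn ler_pXn2r ?nnegrE ?normr_ge0 //.
  exact: ip_cauchy_schwarz.
by rewrite mulr_ge0 ?nrm_ge0.
Qed.

Lemma mul_le_of_le_divinf (R : realType) (t a b : R) : 0 <= t -> 0 <= a -> 0 <= b ->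
  (t%:E <= divinf a b)%E -> t * b <= a.
Proof.
move=> t0 a0 b0; rewrite /divinf; case: eqP => [->|/eqP b_neq0]; first by rewrite mulr0.
by rewrite lee_fin ler_pdivlMr // lt0r b_neq0.
Qed.

Lemma le_divinf_of_mul_le (R : realType) (c a b : R) : 0 < c -> 0 <= b ->
  c * b <= a -> (c%:E <= divinf a b)%E.
Proof.
move=> c0 b0 cba; rewrite /divinf; case: eqP => [_|/eqP b_neq0]; first exact: leey.
by rewrite lee_fin ler_pdivlMr // lt0r b_neq0.
Qed.

Lemma le_divinf_lipschitz (R : realType) (mu L a b : R) : 0 < mu -> 0 <= L ->
  0 <= a -> 0 <= b -> b <= L * a -> ((mu / (L + 1))%:E <= divinf (mu * a) b)%E.
Proof.
move=> mu0 L0 a0 b0 bLa; have L1 : 0 < L + 1 by rewrite ltr_wpDl.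
apply: le_divinf_of_mul_le => //; first by rewrite divr_gt0.
have bL1a : b <= (L + 1) * a by apply: le_trans bLa _; rewrite ler_wpM2r // lerDl.
by rewrite mulrAC ler_pdivrMr // -mulrA [a * _]mulrC ler_wpM2l // ltW.
Qed.

Lemma discriminant_perturb (R : realType) (A B C : R) : 0 < A + B ->
  B ^+ 2 < (A + B) * (C + B) ->
  exists2 eps, 0 < eps & 0 < A + B - eps /\ B ^+ 2 < (A + B - eps) * (C + B - eps).
Proof.
move=> AB0 disc; set Phi := (A + B) * (C + B) - B ^+ 2; set L := A + C + 2 * B.
have Phi0 : 0 < Phi by rewrite subr_gt0.
have L1 : 0 < `|L| + 1 by rewrite ltr_wpDl.
pose eps := Num.min ((A + B) / 2) (Phi / (2 * (`|L| + 1))).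
have eps0 : 0 < eps by rewrite lt_min !divr_gt0 ?mulr_gt0.
have eps_AB : eps <= (A + B) / 2 by rewrite ge_min lexx.
have eps_Phi : eps * (2 * (`|L| + 1)) <= Phi.
  by rewrite -ler_pdivlMr ?mulr_gt0 // ge_min lexx orbT.
exists eps => //; split; first by lra.
rewrite -subr_gt0.
have -> : (A + B - eps) * (C + B - eps) - B ^+ 2 = Phi - eps * L + eps ^+ 2.
  by rewrite /Phi /L; ring.
have : eps * L <= eps * `|L| by rewrite ler_wpM2l ?ler_norm // ltW.
by have := normr_ge0 L; have := sqr_ge0 eps; nra.
Qed.

Lemma pgrpda_parameters (R : realType) (psi mu mu' : R) : 1 < psi ->
  0 < 3 * mu' -> 3 * mu' < mu ->
  mu < psi / 2 + psi * (1 + psi - psi ^+ 2) / (2 * (psi + 1)) ->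
  [/\ 0 < (1 + psi^-1 - psi) + (psi - mu - 2 * mu'),
      (psi - mu - 2 * mu') ^+ 2 <
        ((1 + psi^-1 - psi) + (psi - mu - 2 * mu')) * (psi + (psi - mu - 2 * mu'))
    & mu < 1].
Proof.
move=> psi1 mu'0 mu'mu mu_lt.
have psi0 : 0 < psi by exact: lt_trans ltr01 psi1.
have psi10 : 0 < psi + 1 by rewrite ltr_wpDl // ltW.
have bound_E : psi / 2 + psi * (1 + psi - psi ^+ 2) / (2 * (psi + 1)) =
    psi * (2 + 2 * psi - psi ^+ 2) / (2 * (psi + 1)) by field; rewrite gt_eqF.
rewrite bound_E ltr_pdivlMr ?mulr_gt0 // in mu_lt.
set s := mu + 2 * mu'.
have s_lt : s * (psi + 1) < psi * (2 + 2 * psi - psi ^+ 2).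
  have : s < 2 * mu by rewrite /s; lra.
  by rewrite -(ltr_pM2r psi10); lra.
have sq_le : psi * (psi * (2 + 2 * psi - psi ^+ 2)) <= (psi + 1) ^+ 2.
  rewrite -subr_ge0.
  have -> : (psi + 1) ^+ 2 - psi * (psi * (2 + 2 * psi - psi ^+ 2)) =
    (psi ^+ 2 - psi - 1) ^+ 2 by ring.
  exact: sqr_ge0.
split.
- have -> : (1 + psi^-1 - psi) + (psi - mu - 2 * mu') = (psi + 1 - s * psi) / psi.
    by rewrite /s; field; rewrite gt_eqF.
  rewrite divr_gt0 // subr_gt0 -(ltr_pM2r psi10).
  have : psi * (s * (psi + 1)) < psi * (psi * (2 + 2 * psi - psi ^+ 2)).
    by rewrite ltr_pM2l.
  by rewrite -expr2; lra.
- rewrite -subr_gt0.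
  have -> : ((1 + psi^-1 - psi) + (psi - mu - 2 * mu')) * (psi + (psi - mu - 2 * mu'))
      - (psi - mu - 2 * mu') ^+ 2 = (psi * (2 + 2 * psi - psi ^+ 2) - s * (psi + 1)) / psi.
    by rewrite /s; field; rewrite gt_eqF.
  by rewrite divr_gt0 // subr_gt0.
- have cubic_gt0 : 0 < 2 * (psi + 1) - psi * (2 + 2 * psi - psi ^+ 2).
    have -> : 2 * (psi + 1) - psi * (2 + 2 * psi - psi ^+ 2) =
      (psi - 4/3) ^+ 2 * (psi + 2/3) + 22/27 by field.
    by apply: ltr_wpDl; [apply: mulr_ge0; [exact: sqr_ge0 | lra] | lra].
  by rewrite -(ltr_pM2r (_ : 0 < 2 * (psi + 1))) ?mulr_gt0 // mul1r; lra.
Qed.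

Section PGRPDA.
Variables (R : realType) (n m : nat) (K : 'M[R]_(m, n))
  (f : 'cV[R]_n -> \bar R) (g : 'cV[R]_m -> \bar R)
  (h : 'cV[R]_n -> R) (gh : 'cV[R]_n -> 'cV[R]_n) (Lbar : R)
  (psi mu mu' beta : R)
  (z x : nat -> 'cV[R]_n) (w y : nat -> 'cV[R]_m) (tau : nat -> R).
Hypotheses (Pf : eproper f) (Cf : econvex f) (Lf : elsc f)
  (Pg : eproper g) (Cg : econvex g) (Ch : rconvex h) (Gh : is_gradient h gh)
  (Lbar_ge0 : 0 <= Lbar) (gh_lip : forall u v, nrm (gh u - gh v) <= Lbar * nrm (u - v))
  (psi_gt1 : 1 < psi) (mu'3_gt0 : 0 < 3 * mu') (mu'3_lt : 3 * mu' < mu)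
  (mu_lt : mu < psi / 2 + psi * (1 + psi - psi ^+ 2) / (2 * (psi + 1)))
  (beta_gt0 : 0 < beta) (tau0_gt0 : 0 < tau 0)
  (iter : forall k, (0 < k)%N ->
     [/\ z k = ((psi - 1) / psi) *: x k.-1 + psi^-1 *: z k.-1,
         is_prox (tau k.-1) f
           (z k - tau k.-1 *: (K^T *m y k.-1) - tau k.-1 *: gh (x k.-1)) (x k),
         (tau k)%:E = Order.min (tau k.-1)%:E
            (Order.min (divinf (mu * nrm (x k - x k.-1))
                               (Num.sqrt beta * nrm (K *m x k - K *m x k.-1)))
                       (divinf (mu' * nrm (x k - x k.-1))
                               (nrm (gh (x k) - gh (x k.-1))))),
         is_prox (beta * tau k)^-1 g ((beta * tau k)^-1 *: y k.-1 + K *m x k) (w k)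
       & y k = y k.-1 + (beta * tau k) *: (K *m x k - w k)]).

Lemma mu'_gt0 : 0 < mu'. Proof. by move: mu'3_gt0; rewrite pmulr_rgt0. Qed.

Lemma mu_gt0 : 0 < mu. Proof. exact: lt_trans mu'3_gt0 mu'3_lt. Qed.

Let beta_ge0 : 0 <= beta. Proof. exact: ltW beta_gt0. Qed.

Let mu'_ge0 : 0 <= mu'. Proof. exact: ltW mu'_gt0. Qed.

Let golden_gt0 : 0 < psi / (psi - 1).
Proof. by rewrite divr_gt0 ?subr_gt0 // (lt_trans ltr01). Qed.

Let golden_ge0 : 0 <= psi / (psi - 1). Proof. exact: ltW golden_gt0. Qed.

#[local] Hint Resolve beta_ge0 mu'_ge0 golden_gt0 golden_ge0 : core.

Lemma tau_step k : (0 < k)%N ->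
  [/\ tau k <= tau k.-1,
      ((tau k)%:E <= divinf (mu * nrm (x k - x k.-1))
                            (Num.sqrt beta * nrm (K *m x k - K *m x k.-1)))%E
    & ((tau k)%:E <= divinf (mu' * nrm (x k - x k.-1))
                            (nrm (gh (x k) - gh (x k.-1))))%E].
Proof.
move=> k0; have [_ _ tauE _ _] := iter k0.
by split; rewrite -?lee_fin tauE !ge_min ?lexx //= ?orbT.
Qed.

Lemma tau_nonincreasing : nonincreasing_seq tau.
Proof. by apply/nonincreasing_seqP => k; have [] := tau_step (ltn0Sn k). Qed.

Lemma tau_lb : exists2 c, 0 < c & forall k, c <= tau k.
Proof.
have [C C0 KC] := mulmx_nrm_le K.
pose c1 := mu / (Num.sqrt beta * C + 1); pose c2 := mu' / (Lbar + 1).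
have sb0 : 0 <= Num.sqrt beta * C by rewrite mulr_ge0 ?sqrtr_ge0.
have c0 : 0 < Num.min (tau 0) (Num.min c1 c2).
  by rewrite !lt_min tau0_gt0 !divr_gt0 ?mu_gt0 ?mu'_gt0 ?ltr_wpDl.
exists (Num.min (tau 0) (Num.min c1 c2)) => // k.
elim: k => [|k IH]; first by rewrite ge_min lexx.
have [_ _ tauE _ _] := iter (ltn0Sn k); rewrite /= in tauE.
rewrite -lee_fin tauE !le_min lee_fin IH /=; apply/andP; split.
- apply: le_trans (le_divinf_lipschitz mu_gt0 sb0 (nrm_ge0 _) _ _).
  + by rewrite lee_fin !ge_min lexx !orbT.
  + by rewrite mulr_ge0 ?sqrtr_ge0 ?nrm_ge0.
  + by rewrite -mulrA ler_wpM2l ?sqrtr_ge0 // -mulmxBr.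
- apply: le_trans (le_divinf_lipschitz mu'_gt0 Lbar_ge0 (nrm_ge0 _) (nrm_ge0 _) _).
  + by rewrite lee_fin !ge_min lexx !orbT.
  + exact: gh_lip.
Qed.

Lemma tau_gt0 k : 0 < tau k.
Proof. by have [c c0 tau_ge] := tau_lb; exact: lt_le_trans c0 (tau_ge k). Qed.

Lemma tau_K_bound k : (0 < k)%N ->
  tau k ^+ 2 * beta * sqnrm (K *m (x k - x k.-1)) <= mu ^+ 2 * sqnrm (x k - x k.-1).
Proof.
move=> k0; have [_ le_tau _] := tau_step k0.
have -> : tau k ^+ 2 * beta * sqnrm (K *m (x k - x k.-1)) =
    (tau k * (Num.sqrt beta * nrm (K *m x k - K *m x k.-1))) ^+ 2.
  by rewrite mulmxBr !exprMn sqr_sqrtr ?(ltW beta_gt0) // sqr_nrm mulrA.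
rewrite -sqr_nrm -exprMn ler_pXn2r ?nnegrE ?mulr_ge0 ?sqrtr_ge0 ?nrm_ge0 ?(ltW mu_gt0)
  ?(ltW (tau_gt0 k)) //.
by apply: mul_le_of_le_divinf le_tau;
  rewrite ?mulr_ge0 ?sqrtr_ge0 ?nrm_ge0 ?(ltW mu_gt0) ?(ltW (tau_gt0 k)).
Qed.

Lemma tau_grad_bound k : (0 < k)%N ->
  tau k ^+ 2 * sqnrm (gh (x k) - gh (x k.-1)) <= mu' ^+ 2 * sqnrm (x k - x k.-1).
Proof.
move=> k0; have [_ _ le_tau] := tau_step k0.
rewrite -!sqr_nrm -!exprMn ler_pXn2r ?nnegrE ?mulr_ge0 ?nrm_ge0 ?(ltW mu'_gt0)
  ?(ltW (tau_gt0 k)) //.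
by apply: mul_le_of_le_divinf le_tau; rewrite ?mulr_ge0 ?nrm_ge0 ?(ltW mu'_gt0) ?(ltW (tau_gt0 k)).
Qed.

Lemma x_prox_vi k : (0 < k)%N -> exists Fk : R, f (x k) = Fk%:E /\
  forall u (fu : R), f u = fu%:E ->
    ip (z k - x k) (u - x k) - tau k.-1 * (ip (y k.-1) (K *m u) - ip (y k.-1) (K *m x k))
      - tau k.-1 * (ip (gh (x k.-1)) u - ip (gh (x k.-1)) (x k)) <= tau k.-1 * (fu - Fk).
Proof.
move=> k0; have [_ prox_x _ _ _] := iter k0.
have [Fk [FkE x_vi]] := is_prox_vi (tau_gt0 _) Pf Cf prox_x.
exists Fk; split => // u fu /x_vi; congr (_ <= _).
have -> : z k - tau k.-1 *: (K^T *m y k.-1) - tau k.-1 *: gh (x k.-1) - x k =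
    (z k - x k) - tau k.-1 *: (K^T *m y k.-1) - tau k.-1 *: gh (x k.-1).
  by apply/matrixP => i j; rewrite !mxE; ring.
by rewrite !ipBl !ipZl ip_trmx mulmxBr !ipBr.
Qed.

Lemma y_conj_subgradient k : (0 < k)%N -> exists Gk : R, conj_fun g (y k) = Gk%:E /\
  forall y', ((Gk + ip (w k) (y' - y k))%:E <= conj_fun g y')%E.
Proof.
move=> k0; have [_ _ _ prox_w yE] := iter k0.
exact: prox_conj_subgradient (mulr_gt0 beta_gt0 (tau_gt0 k)) Pg Cg prox_w yE.
Qed.

(* Sum of the optimality conditions of the two proximal steps (tested at the saddle
   point and at the next iterate), of the saddle inequalities and of the convexity of
   h: the function values cancel and only the coupling terms remain. *)
Lemma step_ineq a b k : saddle_point f h K g a b -> (0 < k)%N ->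
  beta * ip (z k.+1 - x k.+1) (a - x k.+1)
    + beta * (tau k / tau k.-1 * psi) * ip (z k.+1 - x k) (x k.+1 - x k)
    + ip (y k.-1 - y k) (b - y k)
  <= beta * tau k * (ip (y k.-1 - y k) (K *m (x k.+1 - x k))
                     + ip (gh (x k) - gh (x k.-1)) (x k - x k.+1)).
Proof.
move=> sad k0.
have [Fa [Gb [FaE GbE sad_x sad_y]]] := saddle_point_fin Pf Pg sad.
have [F0 [F0E x0_vi]] := x_prox_vi k0.
have [F1 [F1E x1_vi]] := x_prox_vi (ltn0Sn k).
have [G0 [G0E y0_sub]] := y_conj_subgradient k0.
have [zE _ _ _ _] := iter (ltn0Sn k).
have [_ _ _ _ yE] := iter k0.
have t0 := tau_gt0 k; have t'0 := tau_gt0 k.-1.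
set t := tau k in t0 yE *; set t' := tau k.-1 in t'0 *.
have P1 := x1_vi a Fa FaE; rewrite /= -/t in P1.
have P0 : t / t' * psi * ip (z k.+1 - x k) (x k.+1 - x k)
    - t * (ip (y k.-1) (K *m x k.+1) - ip (y k.-1) (K *m x k))
    - t * (ip (gh (x k.-1)) (x k.+1) - ip (gh (x k.-1)) (x k)) <= t * (F1 - F0).
  have psi0 : psi != 0 by rewrite gt_eqF // (lt_trans ltr01).
  have zx : z k - x k = psi *: (z k.+1 - x k).
    by rewrite zE; apply/matrixP => i j; rewrite !mxE /=; field.
  have := ler_wpM2l (ltW (divr_gt0 t0 t'0)) (x0_vi (x k.+1) F1 F1E).
  by rewrite zx ipZl -/t'; congr (_ <= _); field; rewrite gt_eqF.
have s0 : 0 <= beta * t by rewrite mulr_ge0 // ltW.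
have D := y0_sub b; rewrite GbE lee_fin in D; move/(ler_wpM2l s0): D.
have -> : beta * t * (G0 + ip (w k) (b - y k)) = beta * t * G0
    + beta * t * (ip (K *m x k) b - ip (y k) (K *m x k)) + ip (y k.-1 - y k) (b - y k).
  have -> : w k = K *m x k + (beta * t)^-1 *: (y k.-1 - y k).
    rewrite yE; apply/matrixP => i j; rewrite !mxE; field.
    by rewrite !gt_eqF.
  rewrite (ipDl (K *m x k)) ipZl (ipBr b (y k)) (ipC (K *m x k) (y k)); field.
  by rewrite !gt_eqF.
move=> D.
have S1 := ler_wpM2l s0 (sad_x (x k) F0 F0E).
have S2 := ler_wpM2l s0 (sad_y (y k) G0 G0E); rewrite (ipC (K *m a) (y k)) in S2.
have Cv := ler_wpM2l s0 (convex_gradient_le Ch Gh a (x k)); rewrite ipBr in Cv.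
have {}P1 := ler_wpM2l (ltW beta_gt0) P1.
have {}P0 := ler_wpM2l (ltW beta_gt0) P0.
have -> : ip (y k.-1 - y k) (K *m (x k.+1 - x k)) + ip (gh (x k) - gh (x k.-1)) (x k - x k.+1)
    = ip (y k.-1) (K *m x k.+1) - ip (y k.-1) (K *m x k) - ip (y k) (K *m x k.+1)
      + ip (y k) (K *m x k) + (ip (gh (x k)) (x k) - ip (gh (x k)) (x k.+1)
      - ip (gh (x k.-1)) (x k) + ip (gh (x k.-1)) (x k.+1)).
  by rewrite mulmxBr !ipBl !ipBr; ring.
lra.
Qed.

Lemma coupling_bound k :
  2 * beta * tau k * ip (y k.-1 - y k) (K *m (x k.+1 - x k))
  <= mu * sqnrm (y k - y k.-1) + beta * (tau k / tau k.+1) ^+ 2 * mu * sqnrm (x k.+1 - x k).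
Proof.
have Y := ip_young (y k.-1 - y k) (beta * tau k *: (K *m (x k.+1 - x k))) mu_gt0.
rewrite ipZr sqnrmZ sqnrmBC in Y.
have t1 := tau_gt0 k.+1; have m0 := mu_gt0.
have c0 : 0 < beta * (tau k / tau k.+1) ^+ 2 / mu.
  by rewrite !mulr_gt0 ?exprn_gt0 ?divr_gt0 ?invr_gt0 ?tau_gt0.
have := ler_wpM2l (ltW c0) (tau_K_bound (ltn0Sn k)); rewrite /=.
set KD := sqnrm (K *m _) in Y *; set D := sqnrm _.
have -> : beta * (tau k / tau k.+1) ^+ 2 / mu * (tau k.+1 ^+ 2 * beta * KD) =
    mu^-1 * ((beta * tau k) ^+ 2 * KD) by field; rewrite !gt_eqF.
have -> : beta * (tau k / tau k.+1) ^+ 2 / mu * (mu ^+ 2 * D) =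
    beta * (tau k / tau k.+1) ^+ 2 * mu * D by field; rewrite !gt_eqF.
by lra.
Qed.

Lemma gradient_bound k : (0 < k)%N ->
  2 * tau k * ip (gh (x k) - gh (x k.-1)) (x k - x k.+1)
  <= mu' * sqnrm (x k - x k.-1) + mu' * sqnrm (x k.+1 - x k).
Proof.
move=> k0; have m0 := mu'_gt0.
have Y := ip_young (x k - x k.+1) (tau k *: (gh (x k) - gh (x k.-1))) m0.
rewrite ipZr sqnrmZ (ipC (x k - x k.+1)) (sqnrmBC (x k)) in Y.
have mV0 : 0 <= mu'^-1 by rewrite invr_ge0 ltW.
have := ler_wpM2l mV0 (tau_grad_bound k0).
have -> : mu'^-1 * (mu' ^+ 2 * sqnrm (x k - x k.-1)) = mu' * sqnrm (x k - x k.-1).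
  by field; rewrite gt_eqF.
by lra.
Qed.

Definition energy a b k := beta * (psi / (psi - 1)) * sqnrm (z k.+1 - a)
  + sqnrm (y k.-1 - b) + beta * mu' * sqnrm (x k - x k.-1).

Definition residual_form k :=
  (1 + psi^-1 - tau k / tau k.-1 * psi) * sqnrm (x k.+1 - z k.+1)
  + tau k / tau k.-1 * psi * sqnrm (z k.+1 - x k)
  + (tau k / tau k.-1 * psi - (tau k / tau k.+1) ^+ 2 * mu - 2 * mu') * sqnrm (x k.+1 - x k).

Lemma energy_ineq a b k : saddle_point f h K g a b -> (0 < k)%N ->
  energy a b k.+1 + beta * residual_form k + (1 - mu) * sqnrm (y k - y k.-1)
  <= energy a b k.
Proof.
move=> sad k0.
have step := step_ineq sad k0.
have coupling := coupling_bound k.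
have grad := ler_wpM2l (ltW beta_gt0) (gradient_bound k0).
have [zE _ _ _ _] := iter (ltn0Sn k.+1); rewrite /= in zE.
have golden := congr1 (fun r => beta * r) (sqnrm_golden a psi_gt1 zE).
have T1 := congr1 (fun r => beta * r) (ip_three_point (z k.+1) (x k.+1) a).
have T0 := congr1 (fun r => beta * (tau k / tau k.-1 * psi) * r)
  (ip_three_point (z k.+1) (x k) (x k.+1)).
have TD := ip_three_point (y k.-1) (y k) b.
rewrite /= !(sqnrmBC (z k.+1) (x k.+1)) !(sqnrmBC a) in T1 T0.
rewrite (sqnrmBC (y k.-1) (y k)) (sqnrmBC b) in TD.
rewrite /energy /residual_form /=.
by lra.
Qed.

Lemma tau_cvg : exists2 l : R, 0 < l & tau @ \oo --> l.
Proof.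
have [c c0 tau_ge] := tau_lb.
have tau_l : tau @ \oo --> inf (range tau).
  apply: nonincreasing_cvgn; first exact: tau_nonincreasing.
  by exists c => _ [k _ <-]; exact: tau_ge.
exists (inf (range tau)) => //.
by apply: lt_le_trans c0 _; apply: (cvgr_to_ge tau_l); apply: nearW.
Qed.

Lemma tau_ratio_cvg : (fun k => tau k.+1 / tau k) @ \oo --> (1 : R).
Proof.
have [l l0 tau_l] := tau_cvg.
rewrite -(divff (lt0r_neq0 l0)); apply: cvgM; first by rewrite -cvg_shiftS in tau_l.
exact: cvgV (lt0r_neq0 l0) tau_l.
Qed.

Lemma tau_inv_ratio_cvg : (fun k => tau k / tau k.+1) @ \oo --> (1 : R).
Proof.
have -> : (fun k => tau k / tau k.+1) = (fun k => (tau k.+1 / tau k)^-1).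
  by apply/funext => k /=; rewrite invf_div.
by rewrite -invr1; exact: cvgV (oner_neq0 R) tau_ratio_cvg.
Qed.

(* Since the step sizes converge, the coefficients of the form tend to those obtained
   for constant steps, whose discriminant is positive by [pgrpda_parameters]. *)
Lemma residual_form_coercive : exists2 eps, 0 < eps &
  \forall k \near \oo,
    eps * (sqnrm (x k.+1 - z k.+1) + sqnrm (z k.+1 - x k)) <= residual_form k.
Proof.
have [AB_gt0 disc_gt0 _] := pgrpda_parameters psi_gt1 mu'3_gt0 mu'3_lt mu_lt.
set A0 := 1 + psi^-1 - psi in AB_gt0 disc_gt0.
set B0 := psi - mu - 2 * mu' in AB_gt0 disc_gt0.
have [eps eps0 [alpha0 Phi_eps]] := discriminant_perturb AB_gt0 disc_gt0.
rewrite -subr_gt0 in Phi_eps.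
exists eps => //.
pose p k := tau k / tau k.-1 * psi; pose q k := (tau k / tau k.+1) ^+ 2 * mu.
have p_cvg : p @ \oo --> psi.
  rewrite -[psi in _ --> psi]mul1r; apply: cvgM; last exact: cvg_cst.
  by rewrite -cvg_shiftS; exact: tau_ratio_cvg.
have q_cvg : q @ \oo --> mu.
  rewrite -[mu in _ --> mu]mul1r; apply: cvgM; last exact: cvg_cst.
  have -> : (fun k => (tau k / tau k.+1) ^+ 2) =
      (fun k => tau k / tau k.+1 * (tau k / tau k.+1)) by apply/funext => k; rewrite expr2.
  by rewrite -(mulr1 1); apply: cvgM; exact: tau_inv_ratio_cvg.
pose alpha k := 1 + psi^-1 - eps - q k - 2 * mu'.
pose B k := p k - q k - 2 * mu'.
have alpha_cvg : alpha @ \oo --> A0 + B0 - eps.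
  have -> : A0 + B0 - eps = 1 + psi^-1 - eps - mu - 2 * mu' by rewrite /A0 /B0; ring.
  by apply: cvgB; [apply: cvgB; [exact: cvg_cst | exact: q_cvg] | exact: cvg_cst].
have B_cvg : B @ \oo --> B0.
  by apply: cvgB; [apply: cvgB; [exact: p_cvg | exact: q_cvg] | exact: cvg_cst].
have disc_cvg : (fun k => alpha k * (p k - eps + B k) - B k ^+ 2) @ \oo -->
    (A0 + B0 - eps) * (psi + B0 - eps) - B0 ^+ 2.
  apply: cvgB; last by rewrite expr2; apply: cvgM.
  apply: cvgM => //; rewrite -addrA [B0 - _]addrC addrA.
  by apply: cvgD => //; apply: cvgB => //; exact: cvg_cst.
have alpha_near := cvgr_gt _ alpha_cvg _ alpha0.
have disc_near := cvgr_gt _ disc_cvg _ Phi_eps.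
near=> k.
have alpha_k : 0 < alpha k by near: k; exact: alpha_near.
have disc_k : B k ^+ 2 < alpha k * (p k - eps + B k).
  by rewrite -subr_gt0; near: k; exact: disc_near.
have := quad_form_ge0 (A := 1 + psi^-1 - p k - eps) (B := B k) (C := p k - eps)
  (x k.+1 - z k.+1) (z k.+1 - x k).
have -> : 1 + psi^-1 - p k - eps + B k = alpha k by rewrite /alpha /B; ring.
move=> /(_ alpha_k (ltW disc_k)); rewrite addrA subrK /residual_form /B /p /q.
by lra.
Unshelve. all: by end_near.
Qed.

Lemma energy_ge0 a b k : 0 <= energy a b k.
Proof. by rewrite /energy; do ![done | exact: sqnrm_ge0 | apply: addr_ge0 | apply: mulr_ge0]. Qed.

Definition dissipation eps k := beta * eps * (sqnrm (x k.+1 - z k.+1) + sqnrm (z k.+1 - x k))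
  + (1 - mu) * sqnrm (y k - y k.-1).

Lemma energy_descent : exists2 eps, 0 < eps & \forall k \near \oo, forall a b,
  saddle_point f h K g a b -> energy a b k.+1 + dissipation eps k <= energy a b k.
Proof.
have [eps eps0 coercive] := residual_form_coercive.
exists eps => //; near=> k => a b sad.
have k0 : (0 < k)%N by near: k; exact: nbhs_infty_gt.
have Dk : eps * (sqnrm (x k.+1 - z k.+1) + sqnrm (z k.+1 - x k)) <= residual_form k.
  by near: k.
have := energy_ineq sad k0; have := ler_wpM2l (ltW beta_gt0) Dk.
by rewrite /dissipation; lra.
Unshelve. all: by end_near.
Qed.

Lemma mu_lt1 : mu < 1.
Proof. by have [] := pgrpda_parameters psi_gt1 mu'3_gt0 mu'3_lt mu_lt. Qed.

Lemma energy_dissipation_cvg a b : saddle_point f h K g a b -> exists2 eps, 0 < eps &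
  cvgn (energy a b) /\ dissipation eps @ \oo --> 0.
Proof.
move=> sad; have [eps eps0 descent] := energy_descent.
exists eps => //; apply: descent_cvg.
- exact: energy_ge0.
- move=> k; have be0 : 0 <= beta * eps by rewrite mulr_ge0 // ltW.
  have mu1 : 0 <= 1 - mu by rewrite subr_ge0 ltW // mu_lt1.
  by rewrite /dissipation; do ![done | exact: sqnrm_ge0 | apply: addr_ge0 | apply: mulr_ge0].
- by apply: filterS descent => k; apply.
Qed.

Lemma residuals_cvg0 a b : saddle_point f h K g a b ->
  [/\ (fun k => sqnrm (x k.+1 - z k.+1)) @ \oo --> 0,
      (fun k => sqnrm (z k.+1 - x k)) @ \oo --> 0,
      (fun k => sqnrm (x k.+1 - x k)) @ \oo --> 0
    & (fun k => sqnrm (y k - y k.-1)) @ \oo --> 0].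
Proof.
move=> sad; have [eps eps0 [_ D_cvg]] := energy_dissipation_cvg sad.
have mu1 : 0 < 1 - mu by rewrite subr_gt0 mu_lt1.
have be0 : 0 < beta * eps by rewrite mulr_gt0.
have dominated (r : nat -> R) c : 0 < c -> (forall k, 0 <= r k) ->
    (forall k, c * r k <= dissipation eps k) -> r @ \oo --> 0.
  move=> c0 r0 rD; apply: (@squeeze_cvgr _ _ _ _ (fun=> 0) (fun k => c^-1 * dissipation eps k)).
  - by apply: nearW => k; rewrite r0 /= ler_pdivlMl.
  - exact: cvg_cst.
  - by rewrite -(mulr0 c^-1); apply: cvgM => //; exact: cvg_cst.
have r1 : (fun k => sqnrm (x k.+1 - z k.+1)) @ \oo --> 0.
  apply: (dominated _ _ be0 (fun k => sqnrm_ge0 _)) => k; rewrite /dissipation.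
  have := sqnrm_ge0 (z k.+1 - x k); have := sqnrm_ge0 (y k - y k.-1).
  by move=> y0 z0; have := mulr_ge0 (ltW mu1) y0; have := mulr_ge0 (ltW be0) z0; lra.
have r2 : (fun k => sqnrm (z k.+1 - x k)) @ \oo --> 0.
  apply: (dominated _ _ be0 (fun k => sqnrm_ge0 _)) => k; rewrite /dissipation.
  have := sqnrm_ge0 (x k.+1 - z k.+1); have := sqnrm_ge0 (y k - y k.-1).
  by move=> y0 z0; have := mulr_ge0 (ltW mu1) y0; have := mulr_ge0 (ltW be0) z0; lra.
split => //.
- apply: (@squeeze_cvgr _ _ _ _ (fun=> 0)
    (fun k => 2 * sqnrm (x k.+1 - z k.+1) + 2 * sqnrm (z k.+1 - x k))).
  + apply: nearW => k; rewrite sqnrm_ge0 /=.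
    by have := sqnrmD_le (x k.+1 - z k.+1) (z k.+1 - x k); rewrite addrA subrK.
  + exact: cvg_cst.
  + have -> : 0 = 2 * 0 + 2 * 0 :> R by rewrite mulr0 addr0.
    by apply: cvgD; apply: cvgM => //; exact: cvg_cst.
- apply: (dominated _ _ mu1 (fun k => sqnrm_ge0 _)) => k; rewrite /dissipation.
  have := mulr_ge0 (ltW be0) (addr_ge0 (sqnrm_ge0 (x k.+1 - z k.+1)) (sqnrm_ge0 (z k.+1 - x k))).
  by lra.
Qed.

Lemma pgrpda_cluster a b : saddle_point f h K g a b ->
  exists xb yb (nu : nat -> nat),
    [/\ forall j, (j < nu j)%N, vcvg (x \o nu) xb & vcvg (y \o nu) yb].
Proof.
move=> sad; have [_ _ [E_cvg _]] := energy_dissipation_cvg sad.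
have [_ r2 _ _] := residuals_cvg0 sad.
set E := limn (energy a b) in E_cvg.
have E_le : \forall k \near \oo, energy a b k <= E + 1.
  by apply: (cvgr_le _ E_cvg); rewrite ltrDl.
have r2_le : \forall k \near \oo, sqnrm (z k.+1 - x k) <= 1 := cvgr_le _ r2 _ ltr01.
have bc0 : 0 < beta * (psi / (psi - 1)) by rewrite mulr_gt0.
have x_bound : \forall k \near \oo,
    sqnrm (x k - a) <= 2 * 1 + 2 * ((E + 1) / (beta * (psi / (psi - 1)))).
  near=> k; have -> : x k - a = (x k - z k.+1) + (z k.+1 - a) by rewrite addrA subrK.
  apply: le_trans (sqnrmD_le _ _) _; apply: lerD; rewrite ler_pM2l //.
    by rewrite sqnrmBC; near: k; exact: r2_le.
  rewrite ler_pdivlMr // mulrC; apply: (@le_trans _ _ (energy a b k)).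
    rewrite /energy -addrA lerDl.
    by do ![done | exact: sqnrm_ge0 | apply: addr_ge0 | apply: mulr_ge0].
  by near: k; exact: E_le.
have [xb [phi [phi_gt x_phi]]] := vcvg_subseq x_bound.
have phi_oo : phi @ \oo --> \oo by apply: geq_id_cvgn => j; exact: ltnW.
have y_le : \forall k \near \oo, sqnrm (y k - b) <= E + 1.
  case: E_le => N _ EN; exists N => // k /leqW /EN /= Ek.
  apply: le_trans Ek; rewrite /energy /= -addrA addrC -!addrA lerDl.
  by do ![done | exact: sqnrm_ge0 | apply: addr_ge0 | apply: mulr_ge0].
have y_bound : \forall j \near \oo, sqnrm ((y \o phi) j - b) <= E + 1 := phi_oo _ y_le.
have [yb [phi2 [phi2_gt y_phi]]] := vcvg_subseq y_bound.
exists xb, yb, (phi \o phi2); split => //.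
- by move=> j; exact: ltn_trans (phi2_gt j) (phi_gt _).
- have phi2_oo : phi2 @ \oo --> \oo by apply: geq_id_cvgn => j; exact: ltnW.
  exact: cvg_comp _ _ phi2_oo x_phi.
Unshelve. all: by end_near.
Qed.

Section Subsequence.
Variables (a : 'cV[R]_n) (b : 'cV[R]_m) (nu : nat -> nat) (xb : 'cV[R]_n) (yb : 'cV[R]_m).
Hypotheses (sad : saddle_point f h K g a b) (nu_gt : forall j, (j < nu j)%N)
  (x_nu : vcvg (x \o nu) xb) (y_nu : vcvg (y \o nu) yb).

Let nu_oo : nu @ \oo --> \oo.
Proof. by apply: geq_id_cvgn => j; exact: ltnW. Qed.

Let nu1_oo : (fun j => (nu j).-1) @ \oo --> \oo.
Proof. by apply: geq_id_cvgn => j; rewrite -ltnS prednK // (leq_ltn_trans _ (nu_gt j)). Qed.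

Let nu_gt0 j : (0 < nu j)%N.
Proof. exact: leq_ltn_trans (leq0n j) (nu_gt j). Qed.

Let Kx_nu : vcvg (fun j => K *m x (nu j)) (K *m xb).
Proof.
have [C C0 KC] := mulmx_nrm_le K.
by apply: (vcvg_dominated (C := C)) x_nu; apply: nearW => j; rewrite -mulmxBr KC.
Qed.

Lemma subseq_limits :
  [/\ vcvg (fun j => x (nu j).-1) xb, vcvg (fun j => y (nu j).-1) yb,
      vcvg (fun j => z (nu j).+1) xb, vcvg (fun j => z (nu j) - x (nu j)) 0
    & vcvg (fun j => w (nu j)) (K *m xb)].
Proof.
have [r1 r2 rx ry] := residuals_cvg0 sad.
split.
- apply: vcvg_close x_nu _; apply: cvg_trans (sqnrm_cvg0_comp nu1_oo rx).
  by apply: near_eq_cvg; apply: nearW => j /=; rewrite prednK // nrmBC.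
- apply: vcvg_close y_nu _; apply: cvg_trans (sqnrm_cvg0_comp nu_oo ry).
  by apply: near_eq_cvg; apply: nearW => j /=; rewrite nrmBC.
- exact: vcvg_close x_nu (sqnrm_cvg0_comp nu_oo r2).
- apply: cvg_trans (sqnrm_cvg0_comp nu1_oo r1).
  by apply: near_eq_cvg; apply: nearW => j /=; rewrite prednK // nrmBC subr0.
- have [c c0 tau_ge] := tau_lb.
  have bc0 : 0 < beta * c by rewrite mulr_gt0.
  apply: vcvg_close Kx_nu _.
  apply: (@squeeze_cvgr _ _ _ _ (fun=> 0)
    (fun j => (beta * c)^-1 * nrm (y (nu j) - y (nu j).-1))).
  + apply: nearW => j; rewrite nrm_ge0 /=.
    have [_ _ _ _ yE] := iter (nu_gt0 j).
    have bt0 : 0 < beta * tau (nu j) by rewrite mulr_gt0 ?tau_gt0.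
    have -> : w (nu j) - K *m x (nu j) = (beta * tau (nu j))^-1 *: (y (nu j).-1 - y (nu j)).
      rewrite yE; apply/matrixP => i l; rewrite !mxE; field.
      by rewrite !gt_eqF ?tau_gt0.
    rewrite nrmZ ger0_norm ?invr_ge0 ?(ltW bt0) // nrmBC ler_wpM2r ?nrm_ge0 //.
    by rewrite lef_pV2 ?posrE // ler_wpM2l.
  + exact: cvg_cst.
  + rewrite -(mulr0 (beta * c)^-1); apply: cvgM; first exact: cvg_cst.
    exact: sqnrm_cvg0_comp nu_oo ry.
Qed.

Lemma subseq_primal_ineq u (fu : R) : f u = fu%:E ->
  (f xb <= (fu + (ip yb (K *m u) - ip yb (K *m xb)) + (ip (gh xb) u - ip (gh xb) xb))%:E)%E.
Proof.
move=> fuE; have [x_nu1 y_nu1 _ zx_nu _] := subseq_limits.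
have gh_nu1 : vcvg (fun j => gh (x (nu j).-1)) (gh xb).
  by apply: (vcvg_dominated (C := Lbar)) x_nu1; apply: nearW => j; exact: gh_lip.
have [l l0 tau_l] := tau_cvg.
pose I j := ip (z (nu j) - x (nu j)) (u - x (nu j)).
have I_cvg : I @ \oo --> 0.
  rewrite /I -(ip0l (u - xb)); apply: ip_vcvg zx_nu _.
  apply: (vcvg_dominated (C := 1)) x_nu; apply: nearW => j.
  by rewrite mul1r /= opprB addrC addrA subrK nrmBC.
rewrite -[fu]subr0 -(mulr0 l^-1).
apply: (Lf (u := x \o nu) (a := fun j => fu - (tau (nu j).-1)^-1 * I j
  + (ip (y (nu j).-1) (K *m u) - ip (y (nu j).-1) (K *m x (nu j)))
  + (ip (gh (x (nu j).-1)) u - ip (gh (x (nu j).-1)) (x (nu j))))).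
- exact: x_nu.
- apply: cvgD; first apply: cvgD.
  + apply: cvgB; first exact: cvg_cst.
    by apply: cvgM I_cvg; exact: cvgV (lt0r_neq0 l0) (cvg_comp _ _ nu1_oo tau_l).
  + by apply: cvgB; [exact: ip_vcvg y_nu1 (vcvg_cst _) | exact: ip_vcvg y_nu1 Kx_nu].
  + by apply: cvgB; [exact: ip_vcvg gh_nu1 (vcvg_cst _) | exact: ip_vcvg gh_nu1 x_nu].
- move=> j; have [F [FE F_vi]] := x_prox_vi (nu_gt0 j); rewrite /= FE lee_fin.
  have := F_vi u fu fuE; have t0 := tau_gt0 (nu j).-1; rewrite -(ler_pM2l t0).
  set A := _ - ip (y _) (K *m x _); set B := _ - ip (gh _) (x _).
  have -> : tau (nu j).-1 * (fu - (tau (nu j).-1)^-1 * I j + A + B) =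
      tau (nu j).-1 * fu - I j + tau (nu j).-1 * A + tau (nu j).-1 * B.
    by field; rewrite gt_eqF.
  by rewrite /I; lra.
Qed.

Lemma subseq_dual_ineq y' (gy : R) : conj_fun g y' = gy%:E ->
  (conj_fun g yb <= (gy - ip (K *m xb) (y' - yb))%:E)%E.
Proof.
move=> gyE; have [_ _ _ _ w_nu] := subseq_limits.
rewrite ipBr; apply: (conj_fun_lsc Pg y_nu
  (a := fun j => gy - (ip (w (nu j)) y' - ip (w (nu j)) (y (nu j))))).
- apply: cvgB; first exact: cvg_cst.
  by apply: cvgB; [exact: ip_vcvg w_nu (vcvg_cst y') | exact: ip_vcvg w_nu y_nu].
- move=> j; have [G [GE G_sub]] := y_conj_subgradient (nu_gt0 j).
  by have := G_sub y'; rewrite gyE lee_fin /= GE lee_fin ipBr; lra.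
Qed.

Lemma saddle_of_subseq : saddle_point f h K g xb yb.
Proof.
have [Fa [Gb [FaE GbE _ _]]] := saddle_point_fin Pf Pg sad.
have [Fb FbE] : exists Fb, f xb = Fb%:E.
  apply: neq_infty_EFin (Pf.1 xb) _ => fxb.
  by have := subseq_primal_ineq FaE; rewrite fxb leye_eq.
have [Gbb GbbE] : exists G, conj_fun g yb = G%:E.
  apply: neq_infty_EFin (conj_fun_neq_Ny (y := yb) Pg) _ => gyb.
  by have := subseq_dual_ineq GbE; rewrite gyb leye_eq.
split; first by rewrite FbE ltry.
split; first by rewrite GbbE ltry.
move=> u v; rewrite /lagr FbE GbbE; split.
- case gvE : (conj_fun g v) => [gv | | ].
  + rewrite -!EFinN -!EFinD lee_fin.
    by have := subseq_dual_ineq gvE; rewrite GbbE lee_fin ipBr; lra.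
  + by rewrite /= leNye.
  + by have := conj_fun_neq_Ny (y := v) Pg; rewrite gvE.
- case fuE : (f u) => [fu | | ].
  + rewrite -!EFinN -!EFinD lee_fin.
    have := subseq_primal_ineq fuE; rewrite FbE lee_fin.
    have := convex_gradient_le Ch Gh u xb.
    by rewrite ipBr (ipC (K *m xb)) (ipC (K *m u)); lra.
  + by rewrite /= leey.
  + by have := Pf.1 u; rewrite fuE.
Qed.

Lemma subseq_energy_cvg0 : energy xb yb @ \oo --> 0.
Proof.
have [_ y_nu1 z_nu1 _ _] := subseq_limits.
have [_ _ rx _] := residuals_cvg0 sad.
have dx : (fun k => sqnrm (x k - x k.-1)) @ \oo --> 0 by rewrite -cvg_shiftS.
have [_ _ [E_cvg _]] := energy_dissipation_cvg saddle_of_subseq.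
have E_nu : energy xb yb \o nu @ \oo --> 0.
  have -> : 0 = beta * (psi / (psi - 1)) * 0 + 0 + beta * mu' * 0 :> R.
    by rewrite !mulr0 !addr0.
  apply: cvgD; first apply: cvgD.
  - by apply: cvgM; [exact: cvg_cst | exact/nrm_cvg0P].
  - exact/nrm_cvg0P.
  - by apply: cvgM; [exact: cvg_cst | exact: cvg_comp _ _ nu_oo dx].
by rewrite -(cvg_unique _ (cvg_comp _ _ nu_oo E_cvg) E_nu).
Qed.

End Subsequence.

Lemma pgrpda_cvg : (exists a b, saddle_point f h K g a b) ->
  exists xs ys, saddle_point f h K g xs ys /\ vcvg x xs /\ vcvg y ys.
Proof.
move=> [a [b sad]].
have [xb [yb [nu [nu_gt x_nu y_nu]]]] := pgrpda_cluster sad.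
have E0 := subseq_energy_cvg0 sad nu_gt x_nu y_nu.
have [_ r2 _ _] := residuals_cvg0 sad.
have bc0 : 0 < beta * (psi / (psi - 1)) by rewrite mulr_gt0.
have energy_dominated (p : nat -> 'cV[R]_n) (q : nat -> 'cV[R]_m) :
    (forall k, beta * (psi / (psi - 1)) * sqnrm (p k) + sqnrm (q k) <= energy xb yb k) ->
    (fun k => sqnrm (p k)) @ \oo --> 0 /\ (fun k => sqnrm (q k)) @ \oo --> 0.
  move=> pqE; split.
  - apply: (@squeeze_cvgr _ _ _ _ (fun=> 0)
      (fun k => (beta * (psi / (psi - 1)))^-1 * energy xb yb k)).
    + apply: nearW => k; rewrite sqnrm_ge0 /= ler_pdivlMl //.
      by apply: le_trans (pqE k); rewrite lerDl; exact: sqnrm_ge0.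
    + exact: cvg_cst.
    + by rewrite -(mulr0 (beta * (psi / (psi - 1)))^-1); apply: cvgM E0; exact: cvg_cst.
  - apply: (@squeeze_cvgr _ _ _ _ (fun=> 0) (energy xb yb)) => //; last exact: cvg_cst.
    apply: nearW => k; rewrite sqnrm_ge0 /=; apply: le_trans (pqE k).
    by rewrite lerDr; apply: mulr_ge0; [exact: ltW | exact: sqnrm_ge0].
have [z_cvg y1_cvg] := energy_dominated (fun k => z k.+1 - xb) (fun k => y k.-1 - yb)
  (fun k => ltac:(by rewrite /energy lerDl; do ![done | exact: sqnrm_ge0 | apply: mulr_ge0])).
exists xb, yb; split; first exact: saddle_of_subseq sad nu_gt x_nu y_nu.
split.
- have z1_cvg : vcvg (fun k => z k.+1) xb by apply/nrm_cvg0P.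
  apply: vcvg_close z1_cvg _; move/nrm_cvg0P: r2; apply: cvg_trans.
  by apply: near_eq_cvg; apply: nearW => k /=; rewrite nrmBC.
- by move/nrm_cvg0P: y1_cvg; rewrite -cvg_shiftS.
Qed.

End PGRPDA.

Theorem theorem3p2 (R : realType) (n m : nat) (K : 'M[R]_(m, n))
  (f : 'cV[R]_n -> \bar R) (g : 'cV[R]_m -> \bar R)
  (h : 'cV[R]_n -> R) (gh : 'cV[R]_n -> 'cV[R]_n) (Lbar : R)
  (psi mu mu' beta : R)
  (z x : nat -> 'cV[R]_n) (w y : nat -> 'cV[R]_m) (tau : nat -> R) :
  eproper f -> econvex f -> elsc f ->
  eproper g -> econvex g -> elsc g ->
  rconvex h -> is_gradient h gh -> 0 <= Lbar ->
  (forall u v, nrm (gh u - gh v) <= Lbar * nrm (u - v)) ->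
  (exists xs ys, saddle_point f h K g xs ys) ->
  rel_int [set K *m u - v | u in edom f & v in edom g] 0 ->
  1 < psi -> psi < 1 + Num.sqrt 3 ->
  0 < 3 * mu' -> 3 * mu' < mu ->
  mu < psi / 2 + psi * (1 + psi - psi ^+ 2) / (2 * (psi + 1)) ->
  0 < beta -> 0 < tau 0 ->
  z 0 = x 0 ->
  (forall k, (0 < k)%N ->
     [/\ z k = ((psi - 1) / psi) *: x k.-1 + psi^-1 *: z k.-1,
         is_prox (tau k.-1) f
           (z k - tau k.-1 *: (K^T *m y k.-1) - tau k.-1 *: gh (x k.-1)) (x k),
         (tau k)%:E = Order.min (tau k.-1)%:E
            (Order.min (divinf (mu * nrm (x k - x k.-1))
                               (Num.sqrt beta * nrm (K *m x k - K *m x k.-1)))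
                       (divinf (mu' * nrm (x k - x k.-1))
                               (nrm (gh (x k) - gh (x k.-1))))),
         is_prox (beta * tau k)^-1 g ((beta * tau k)^-1 *: y k.-1 + K *m x k) (w k)
       & y k = y k.-1 + (beta * tau k) *: (K *m x k - w k)]) ->
  exists xs ys, saddle_point f h K g xs ys /\
    (fun k => nrm (x k - xs)) @ \oo --> (0 : R) /\
    (fun k => nrm (y k - ys)) @ \oo --> (0 : R).
Proof.
(* Not needed: g^* is lower semicontinuous whatever g is; the qualification condition
   only serves to guarantee saddle points, which are assumed; psi < 1 + sqrt 3 follows
   from the bound on mu; and the initialization z 0 is arbitrary. *)
move=> Pf Cf Lf Pg Cg _ Ch Gh Lbar_ge0 gh_lip sad _ psi_gt1 _ mu'3_gt0 mu'3_lt mu_lt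
  beta_gt0 tau0_gt0 _ iter.
exact: pgrpda_cvg Pf Cf Lf Pg Cg Ch Gh Lbar_ge0 gh_lip psi_gt1 mu'3_gt0 mu'3_lt mu_lt
  beta_gt0 tau0_gt0 iter sad.
Qed.
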